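(* Let $f:\mathbb{Z}_+^E\to\mathbb{R}_{\ge0}$ be non-negative and DR-submodular, accessible through a value oracle, $|E|=n$, $k$ a positive integer and $\alpha\in(0,1)$ a constant. The output $\mathbf{z}$ of Algorithm FastDrSub$(f,E,k,\alpha)$ is feasible for the DrSMC problem and satisfies $$f(\mathbf{z})\ge\frac{1}{8\frac{2-\alpha}{1-\alpha}+\frac{1}{\alpha}}\,\mathsf{opt},$$ and the algorithm uses $O(n\log k)$ oracle queries. In particular, for $\alpha=\frac{2\sqrt2-1}{7}$ the ratio equals $\frac{1}{17+4\sqrt2}\approx0.044$.
   Context: Notation: $E$ is a finite ground set of size $n$; $\mathbf{1}_e$ is the $e$-th unit vector; $\mathbf{x}\le\mathbf{y}$ is coordinatewise; $\|\mathbf{x}\|_1=\sum_{e}\mathbf{x}(e)$; $f(\mathbf{a}\mid\mathbf{b}):=f(\mathbf{a}+\mathbf{b})-f(\mathbf{b})$. $f$ is DR-submodular if $f(\mathbf{x}+\mathbf{1}_e)-f(\mathbf{x})\ge f(\mathbf{y}+\mathbf{1}_e)-f(\mathbf{y})$ for all $\mathbf{x}\le\mathbf{y}$ and $e\in E$. A query is one evaluation of $f$. DrSMC problem: maximize $f(\mathbf{x})$ over $\mathbf{x}\in\mathbb{Z}_+^E$ subject to $\|\mathbf{x}\|_1\le k$ and $\mathbf{0}\le\mathbf{x}\le k\cdot\mathbf{1}$; $\mathsf{opt}$ denotes its optimal value. Algorithm FastDrSub$(f,E,k,\alpha)$ (elements of $E$ are processed in a fixed order): 1. Compute $(d_{\max},e_{\max})\in\arg\max\{f(d\mathbf{1}_e):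 e\in E,\ d\in\mathbb{Z},\ \alpha k<d\le k\}$. 2. Set $\mathbf{x}\leftarrow\mathbf{0}$, $\mathbf{y}\leftarrow\mathbf{0}$. 3. For each $e\in E$ in order: let $d_{(\mathbf{x},e)}=\max\{d\in\mathbb{Z}: 0<d\le\alpha k,\ f(\mathbf{1}_e\mid\mathbf{x}+(d-1)\mathbf{1}_e)\ge f(\mathbf{x})/k\}$ and $d_{(\mathbf{y},e)}=\max\{d\in\mathbb{Z}: 0<d\le\alpha k,\ f(\mathbf{1}_e\mid\mathbf{y}+(d-1)\mathbf{1}_e)\ge f(\mathbf{y})/k\}$ (each computed by binary search on $d$, and taken to be $0$ if the set is empty). If $f(d_{(\mathbf{x},e)}\mathbf{1}_e\mid\mathbf{x})\ge f(d_{(\mathbf{y},e)}\mathbf{1}_e\mid\mathbf{y})$, set $\mathbf{x}\leftarrow\mathbf{x}+d_{(\mathbf{x},e)}\mathbf{1}_e$; otherwise set $\mathbf{y}\leftarrow\mathbf{y}+d_{(\mathbf{y},e)}\mathbf{1}_e$. 4. (Trimming) Let $e_1,e_2,\dots$ be the elements of $\{e:\mathbf{x}(e)>0\}$ listed in reverse order of their addition to $\mathbf{x}$ (most recent first) and $\mathbf{x}_t=\sum_{i=1}^t\mathbf{x}(e_i)\mathbf{1}_{e_i}$; let $\mathbf{x}'=\mathbf{x}_t$ for the largest $t$ with $\|\mathbf{x}_t\|_1\le k$. Define $\mathbf{y}'$ from $\mathbf{y}$ in the same way. 5. Return $\mathbf{z}\in\arg\max\{f(\mathbf{t}):\mathbf{t}\in\{\mathbf{x}',\mathbf{y}',d_{\max}\mathbf{1}_{e_{\max}}\}\}$.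 *)

From HB Require Import structures.
From mathcomp Require Import all_boot all_order all_algebra.
From mathcomp Require Import reals.
Set Implicit Arguments. Unset Strict Implicit. Unset Printing Implicit Defensive.
Import Order.TTheory GRing.Theory Num.Theory.
Local Open Scope ring_scope.

(** Ground set E = 'I_n, processed in the order 0, 1, ..., n-1.
    Integer vectors x in Z_+^E are finite functions 'I_n -> nat. *)
Definition vec (n : nat) := {ffun 'I_n -> nat}.

Definition uvec n (e : 'I_n) (d : nat) : vec n :=
  [ffun i => if i == e then d else 0%N].
Definition vadd n (x y : vec n) : vec n := [ffun i => (x i + y i)%N].
Definition norm1 n (x : vec n) : nat := (\sum_(i < n) x i)%N.
Definition vle n (x y : vec n) : Prop := forall i, (x i <= y i)%N.

Definition DR_submodular (R : realType) n (f : vec n -> R) : Prop :=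
  forall (x y : vec n) (e : 'I_n), vle x y ->
    f (vadd y (uvec e 1)) - f y <= f (vadd x (uvec e 1)) - f x.

Definition feasible n (k : nat) (x : vec n) : Prop :=
  (norm1 x <= k)%N /\ (forall i, (x i <= k)%N).

(** ---------- Value-oracle query model ----------
    A program that may query the oracle at points of V (receiving values in R)
    and finally returns an A.  [qrun f p] executes it against the oracle f and
    returns the result together with the number of queries made. *)
Inductive qprog (V R A : Type) : Type :=
| QRet : A -> qprog V R A
| QAsk : V -> (R -> qprog V R A) -> qprog V R A.
Arguments QRet {V R A}.
Arguments QAsk {V R A}.

Fixpoint qbind V R A B (p : qprog V R A) (g : A -> qprog V R B) : qprog V R B :=
  match p with
  | QRet a => g a
  | QAsk v c => QAsk v (fun r => qbind (c r) g)
  end.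

Fixpoint qrun V R A (f : V -> R) (p : qprog V R A) : A * nat :=
  match p with
  | QRet a => (a, 0%N)
  | QAsk v c => let r := qrun f (c (f v)) in (r.1, r.2.+1)
  end.

Definition query {V R : Type} (v : V) : qprog V R R := QAsk v QRet.

Fixpoint qfoldl V R S T (step : S -> T -> qprog V R S) (st : S) (s : seq T)
  : qprog V R S :=
  match s with
  | [::] => QRet st
  | t :: s' => qbind (step st t) (fun st' => qfoldl step st' s')
  end.

(** Binary search: the largest d in (lo, hi] with P d (P assumed to be
    true-then-false on this range), or lo if there is none.
    Each round halves the range; the fuel hi - lo is never exhausted. *)
Fixpoint bsearch V R (P : nat -> qprog V R bool) (fuel lo hi : nat)
  : qprog V R nat :=
  match fuel with
  | 0 => QRet lo
  | fuel'.+1 =>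
    if (hi <= lo)%N then QRet lo else
    let mid := (lo + hi).+1./2 in
    qbind (P mid) (fun b =>
      if b then bsearch P fuel' mid hi else bsearch P fuel' lo mid.-1)
  end.

Definition bsearch_top V R (P : nat -> qprog V R bool) (lo hi : nat) :=
  bsearch P (hi - lo) lo hi.

Section FastDrSub.
Variables (R : realType) (n k : nat) (alpha : R).
Local Notation V := (vec n).
Local Notation Q := (qprog V R).

(** floor(alpha k): d <= alpha k  <->  d <= m ;  alpha k < d  <->  m < d *)
Definition m_alpha : nat := Num.truncn (alpha * k%:R).

(** Step 1, for a fixed e: a maximiser of d |-> f(d 1_e) over alpha k < d <= k.
    Since f(. 1_e) is concave (DR-submodularity), this is the largest d in
    (m+1, k] whose marginal f(d 1_e) - f((d-1) 1_e) is >= 0, or m+1. *)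
Definition best_d (e : 'I_n) : Q nat :=
  bsearch_top (fun d =>
      qbind (query (uvec e d)) (fun a =>
      qbind (query (uvec e d.-1)) (fun b => QRet (0 <= a - b))))
    m_alpha.+1 k.

Definition step1 : Q (option (R * nat * 'I_n)) :=
  qfoldl (fun (best : option (R * nat * 'I_n)) e =>
      qbind (best_d e) (fun d =>
      qbind (query (uvec e d)) (fun v =>
        QRet (match best with
              | None => Some (v, d, e)
              | Some (bv, bd, be) =>
                  if bv < v then Some (v, d, e) else Some (bv, bd, be)
              end))))
    None (enum 'I_n).

(** d_(x,e) = max{ d : 0 < d <= alpha k, f(1_e | x + (d-1)1_e) >= f(x)/k }, or 0. *)
Definition d_of (x : V) (e : 'I_n) : Q nat :=
  qbind (query x) (fun fx =>
  bsearch_top (fun d =>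
      qbind (query (vadd x (uvec e d))) (fun a =>
      qbind (query (vadd x (uvec e d.-1))) (fun b =>
        QRet (fx / k%:R <= a - b))))
    0 m_alpha).

(** Step 3 state: (x, y, elements added to x in order, elements added to y). *)
Definition state := (V * V * seq 'I_n * seq 'I_n)%type.

Definition step3 (st : state) (e : 'I_n) : Q state :=
  let: (x, y, lx, ly) := st in
  qbind (d_of x e) (fun dx =>
  qbind (d_of y e) (fun dy =>
  qbind (query (vadd x (uvec e dx))) (fun gx =>
  qbind (query x) (fun fx =>
  qbind (query (vadd y (uvec e dy))) (fun gy =>
  qbind (query y) (fun fy =>
    if gy - fy <= gx - fx then
      QRet (vadd x (uvec e dx), y, (if (0 < dx)%N then rcons lx e else lx), ly)
    else
      QRet (x, vadd y (uvec e dy), lx, (if (0 < dy)%N then rcons ly e else ly)))))))).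

(** Step 4: with e_1, e_2, ... the elements added, most recent first,
    x_t = sum_{i <= t} x(e_i) 1_{e_i}, and x' = x_t for the largest t with
    ||x_t||_1 <= k. *)
Definition xpref (x : V) (l : seq 'I_n) (t : nat) : V :=
  [ffun i => if i \in take t (rev l) then x i else 0%N].
Definition trim (x : V) (l : seq 'I_n) : V :=
  xpref x l (\max_(t < (size l).+1 | (norm1 (xpref x l t) <= k)%N) t)%N.

Definition pick_best (cur : V) (cands : seq V) : Q V :=
  qbind (query cur) (fun fc =>
  qbind (qfoldl (fun (b : V * R) c =>
          qbind (query c) (fun fcv => QRet (if b.2 < fcv then (c, fcv) else b)))
        (cur, fc) cands)
  (fun b => QRet b.1)).

Definition FastDrSub : Q V :=
  qbind step1 (fun best =>
  qbind (qfoldl step3 (0 : V, 0 : V, [::], [::]) (enum 'I_n)) (fun st =>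
    let: (x, y, lx, ly) := st in
    let x' := trim x lx in
    let y' := trim y ly in
    pick_best x' (y' :: match best with
                       | None => [::]
                       | Some (_, d, e) => [:: uvec e d]
                       end))).

End FastDrSub.

From HB Require Import structures.
From mathcomp Require Import all_boot all_order all_algebra.
From mathcomp Require Import reals.
From mathcomp Require Import zify ring lra.
Import Order.TTheory GRing.Theory Num.Theory.
Local Open Scope ring_scope.
Set Implicit Arguments. Unset Strict Implicit. Unset Printing Implicit Defensive.

(* A non-negative DR-submodular function is monotone, so step 1 always picks
   d = k and dominates every single-element vector k 1_e.  In step 3 an element
   enters x (or y) only with marginal density >= f(x)/k, hence every block of
   the greedy chain x is worth at least |block| f(x)/k; trimming x to norm <= k
   then keeps f(x') >= (1 - alpha)/(2 - alpha) f(x) = f(x)/rho, and likewise for y.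
   Split a feasible o into its coordinates > alpha k, at most 1/alpha of them, each
   worth at most f(z), and the rest o_low, for which DR-submodularity and the
   thresholds give f(o_low) <= f(x v o_low) <= 2 f(x) + f(y).  Altogether
   opt <= (3 rho + 1/alpha) f(z), better than the claimed 8 rho + 1/alpha.
   Each element costs O(log k) queries through the binary searches. *)

Section Vectors.
Variable n : nat.
Implicit Types (x y v w : vec n) (e i : 'I_n).

Lemma vaddE x y i : vadd x y i = (x i + y i)%N. Proof. by rewrite ffunE. Qed.
Lemma uvecE e d i : uvec e d i = (if i == e then d else 0)%N. Proof. by rewrite ffunE. Qed.
Lemma vec0E i : (0 : vec n) i = 0%N. Proof. by rewrite ffunE. Qed.

Lemma vaddA : associative (@vadd n).
Proof. by move=> x y w; apply/ffunP=> i; rewrite !vaddE addnA. Qed.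
Lemma vaddC : commutative (@vadd n).
Proof. by move=> x y; apply/ffunP=> i; rewrite !vaddE addnC. Qed.
Lemma vaddv0 x : vadd x 0 = x.
Proof. by apply/ffunP=> i; rewrite vaddE vec0E addn0. Qed.
Lemma vadd0v x : vadd 0 x = x.
Proof. by rewrite vaddC vaddv0. Qed.

Lemma uvec0 e : uvec e 0 = 0.
Proof. by apply/ffunP=> i; rewrite uvecE vec0E; case: ifP. Qed.
Lemma uvecD e a b : uvec e (a + b) = vadd (uvec e a) (uvec e b).
Proof. by apply/ffunP=> i; rewrite vaddE !uvecE; case: ifP. Qed.
Lemma vadd_uvecS x e d :
  vadd x (uvec e d.+1) = vadd (vadd x (uvec e d)) (uvec e 1).
Proof. by rewrite -vaddA -uvecD addn1. Qed.

Lemma norm1D x y : norm1 (vadd x y) = (norm1 x + norm1 y)%N.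
Proof. by rewrite /norm1 -big_split; apply: eq_bigr => i _; rewrite vaddE. Qed.
Lemma norm1_uvec e d : norm1 (uvec e d) = d.
Proof.
rewrite /norm1 (bigD1 e) //= big1 ?addn0 ?uvecE ?eqxx // => i /negbTE ie.
by rewrite uvecE ie.
Qed.
Lemma norm10 : norm1 (0 : vec n) = 0%N.
Proof. by rewrite /norm1 big1 // => i _; rewrite vec0E. Qed.
Lemma leq_norm1 x i : (x i <= norm1 x)%N.
Proof. by rewrite /norm1 (bigD1 i) //= leq_addr. Qed.
Lemma norm1_vle x y : vle x y -> (norm1 x <= norm1 y)%N.
Proof. by move=> hxy; apply: leq_sum => i _. Qed.

Lemma vle0v x : vle 0 x. Proof. by move=> i; rewrite vec0E. Qed.
Lemma vle_addr x v : vle x (vadd x v).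
Proof. by move=> i; rewrite vaddE leq_addr. Qed.
Lemma vle_add2r x y v : vle x y -> vle (vadd x v) (vadd y v).
Proof. by move=> h i; rewrite !vaddE leq_add2r. Qed.
Lemma vle_add2l x y v : vle x y -> vle (vadd v x) (vadd v y).
Proof. by move=> h i; rewrite !vaddE leq_add2l. Qed.

Lemma vle_vaddP x y : vle x y -> exists v, y = vadd x v.
Proof.
by move=> h; exists [ffun i => (y i - x i)%N]; apply/ffunP=> i; rewrite vaddE ffunE subnKC.
Qed.

Lemma vec_ind (P : vec n -> Prop) :
  P 0 -> (forall v e, P v -> P (vadd v (uvec e 1))) -> forall v, P v.
Proof.
move=> P0 PS v; elim: {v}(norm1 v).+1 {-2}v (ltnSn (norm1 v)) => // N IH v.
case: (pickP (fun i => 0 < v i)%N) => [e ve|v0] hv; last first.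
  suff -> : v = 0 by [].
  by apply/ffunP=> i; rewrite vec0E; apply/eqP; rewrite -leqn0 leqNgt v0.
pose v' : vec n := [ffun i => (v i - (i == e))%N].
move: hv; have -> : v = vadd v' (uvec e 1).
  apply/ffunP=> i; rewrite vaddE uvecE ffunE.
  by case: eqP => [->|_]; rewrite ?subn0 ?addn0 // subnK.
rewrite norm1D norm1_uvec addn1 ltnS => hv.
exact/PS/IH.
Qed.

End Vectors.

Section DRSubmodular.
Variables (R : realType) (n : nat) (f : vec n -> R).
Hypothesis fDR : DR_submodular f.
Implicit Types (x y v w z : vec n) (e i : 'I_n).

Lemma DR_line_marginal z e j j' : (j <= j')%N ->
  f (vadd z (uvec e j'.+1)) - f (vadd z (uvec e j'))
  <= f (vadd z (uvec e j.+1)) - f (vadd z (uvec e j)).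
Proof.
move=> h; rewrite (vadd_uvecS z e j') (vadd_uvecS z e j); apply/fDR/vle_add2l.
by move=> i; rewrite !uvecE; case: ifP.
Qed.

Lemma DR_gain_le x y v : vle y x -> f (vadd x v) - f x <= f (vadd y v) - f y.
Proof.
elim/vec_ind: v x y => [|v e IH] x y h; first by rewrite !vaddv0 !subrr.
rewrite !vaddA; have := fDR e (vle_add2r v h); have := IH x y h; lra.
Qed.

Lemma DR_subadditive x y : f (vadd x y) <= f x + f y - f 0.
Proof. by have := DR_gain_le y (vle0v x); rewrite vadd0v; lra. Qed.

Lemma DR_gain_le_sum_seq x v s : uniq s ->
  f (vadd x [ffun i => if i \in s then v i else 0%N]) - f x
  <= \sum_(i <- s) (f (vadd x (uvec i (v i))) - f x).
Proof.
elim: s => [|a s IH] /=.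
  by move=> _; rewrite big_nil (_ : [ffun _ => _] = 0) ?vaddv0 ?subrr //; apply/ffunP=> i; rewrite !ffunE.
case/andP=> as_ /IH; rewrite big_cons.
set vs := [ffun i => _]; set vas := [ffun i => _].
have -> : vas = vadd vs (uvec a (v a)).
  apply/ffunP=> i; rewrite vaddE uvecE !ffunE in_cons.
  by case: eqP => [->|_] /=; rewrite ?(negbTE as_) ?addn0.
rewrite vaddA; have := DR_gain_le (uvec a (v a)) (vle_addr x vs); lra.
Qed.

Lemma DR_gain_le_sum x v :
  f (vadd x v) - f x <= \sum_(i < n) (f (vadd x (uvec i (v i))) - f x).
Proof.
have := DR_gain_le_sum_seq x v (index_enum_uniq 'I_n).
by rewrite (_ : [ffun _ => _] = v) //; apply/ffunP=> i; rewrite ffunE mem_index_enum.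
Qed.

Lemma line_gain_ge z e c r :
  (forall j, (j < r)%N -> c <= f (vadd z (uvec e j.+1)) - f (vadd z (uvec e j))) ->
  r%:R * c <= f (vadd z (uvec e r)) - f z.
Proof.
elim: r => [|r IH] h; first by rewrite uvec0 vaddv0 mul0r subrr.
have := h r (ltnSn r); have := IH (fun j hj => h j (ltnW hj)).
rewrite mulrSr mulrDl mul1r; lra.
Qed.

Lemma line_gain_le z e c r :
  (forall j, (j < r)%N -> f (vadd z (uvec e j.+1)) - f (vadd z (uvec e j)) <= c) ->
  f (vadd z (uvec e r)) - f z <= r%:R * c.
Proof.
elim: r => [|r IH] h; first by rewrite uvec0 vaddv0 mul0r subrr.
have := h r (ltnSn r); have := IH (fun j hj => h j (ltnW hj)).
rewrite mulrSr mulrDl mul1r; lra.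
Qed.

Hypothesis f_ge0 : forall x, 0 <= f x.

(* A negative marginal would persist along the ray and drive f below 0. *)
Lemma DR_monotone1 x e : f x <= f (vadd x (uvec e 1)).
Proof.
rewrite leNgt; apply/negP => hlt.
set c := f x - f (vadd x (uvec e 1)).
have c_gt0 : 0 < c by rewrite subr_gt0.
pose t := Num.Def.archi_bound (f x / c).
have ht : f x < t%:R * c.
  by rewrite -ltr_pdivrMr //; apply: archi_boundP; rewrite divr_ge0 // ltW.
have : f (vadd x (uvec e t)) - f x <= t%:R * - c.
  apply: line_gain_le => j _.
  by have := fDR e (vle_addr x (uvec e j)); rewrite -vadd_uvecS /c; lra.
by have := f_ge0 (vadd x (uvec e t)); lra.
Qed.

Lemma DR_monotone x y : vle x y -> f x <= f y.
Proof.
case/vle_vaddP=> v ->; elim/vec_ind: v x => [|v e IH] x; first by rewrite vaddv0.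
by rewrite vaddA; apply: le_trans (IH x) (DR_monotone1 _ _).
Qed.

End DRSubmodular.

Section QueryRuns.
Variables (V R : Type) (f : V -> R).

Lemma qrun_bind A B (p : qprog V R A) (g : A -> qprog V R B) :
  qrun f (qbind p g) =
  ((qrun f (g (qrun f p).1)).1, ((qrun f p).2 + (qrun f (g (qrun f p).1)).2)%N).
Proof. by elim: p => [a|v c IH] /=; [case: (qrun f (g a)) | rewrite IH]. Qed.

Lemma qfoldl_ind S T (step : S -> T -> qprog V R S) (I : S -> seq T -> Prop) :
  (forall t s st, I st (t :: s) -> I (qrun f (step st t)).1 s) ->
  forall s st, I st s -> I (qrun f (qfoldl step st s)).1 [::].
Proof. by move=> hI; elim=> [|t s IH] st //= /hI /IH; rewrite qrun_bind. Qed.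

Lemma qfoldl_queries S T (step : S -> T -> qprog V R S) c :
  (forall st t, ((qrun f (step st t)).2 <= c)%N) ->
  forall s st, ((qrun f (qfoldl step st s)).2 <= size s * c)%N.
Proof. by move=> hc; elim=> [|t s IH] st //=; rewrite qrun_bind mulSn leq_add. Qed.

Variable P : nat -> qprog V R bool.
Local Notation test d := (qrun f (P d)).1.

Lemma bsearch_spec lo0 hi0 fuel lo hi :
  (lo0 <= lo <= hi)%N -> (hi <= hi0)%N -> (hi - lo <= fuel)%N ->
  (lo = lo0 \/ test lo) -> (hi = hi0 \/ ~~ test hi.+1) ->
  let r := (qrun f (bsearch P fuel lo hi)).1 in
  [/\ (lo0 <= r <= hi0)%N, (r = lo0 \/ test r) & (r = hi0 \/ ~~ test r.+1)].
Proof.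
elim: fuel lo hi => [|fuel IH] lo hi /andP[h1 h2] h3 h4 h5 h6 /=.
  have E : hi = lo by lia.
  by subst hi; split=> //; lia.
case: ifP => hl /=.
  have E : hi = lo by lia.
  by subst hi; split=> //; lia.
rewrite qrun_bind; set mid := (lo + hi).+1./2.
have hmid : (lo < mid <= hi)%N by rewrite /mid -divn2; lia.
case hb: (test mid).
  by apply: IH => //; try lia; right.
by apply: IH => //; try lia; right; rewrite prednK ?hb //; lia.
Qed.

Lemma bsearch_queries j fuel lo hi :
  (forall d, ((qrun f (P d)).2 <= 2)%N) -> (hi - lo < 2 ^ j)%N ->
  ((qrun f (bsearch P fuel lo hi)).2 <= 2 * j)%N.
Proof.
move=> hP; elim: j fuel lo hi => [|j IH] [|fuel] lo hi h //=.
  by rewrite expn0 in h; have -> : (hi <= lo)%N by lia.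
case: ifP => // hl; rewrite qrun_bind /= uphalfE -divn2.
have := hP ((lo + hi).+1 %/ 2)%N; rewrite expnS in h.
case: (test _) => hp; [have := IH fuel ((lo + hi).+1 %/ 2)%N hi
                     | have := IH fuel lo ((lo + hi).+1 %/ 2).-1];
  by move=> /(_ ltac:(lia)); lia.
Qed.

End QueryRuns.

Section Thresholds.
Variables (R : realType) (n k : nat) (alpha : R) (f : vec n -> R).
Hypothesis f_ge0 : forall x, 0 <= f x.
Hypothesis fDR : DR_submodular f.
Hypothesis k_gt0 : (0 < k)%N.
Hypotheses (alpha_gt0 : 0 < alpha) (alpha_lt1 : alpha < 1).
Implicit Types (x y v w z : vec n) (e i : 'I_n).

Local Notation m := (m_alpha k alpha).
Local Notation J := (trunc_log 2 k).+1.

Lemma alpha_k_ge0 : 0 <= alpha * k%:R.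
Proof. by rewrite mulr_ge0 // ltW. Qed.

Lemma m_alpha_le : (m%:R : R) <= alpha * k%:R.
Proof. by rewrite /m_alpha truncn_le alpha_k_ge0. Qed.

Lemma m_alpha_gt : alpha * k%:R < m.+1%:R.
Proof. exact: truncnS_gt. Qed.

Lemma m_alpha_lt : (m < k)%N.
Proof.
rewrite /m_alpha truncn_lt_nat ?alpha_k_ge0 //.
have : 0 < (1 - alpha) * k%:R by rewrite mulr_gt0 ?ltr0n // subr_gt0.
by rewrite mulrBl mul1r; lra.
Qed.

Lemma threshold_gain_ge x e r c :
  (r = 0%N \/ c <= f (vadd x (uvec e r)) - f (vadd x (uvec e r.-1))) ->
  r%:R * c <= f (vadd x (uvec e r)) - f x.
Proof.
case: r => [_|r [//|h]]; first by rewrite uvec0 vaddv0 mul0r subrr.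
by apply: line_gain_ge => j hj; apply: le_trans h (DR_line_marginal fDR x e _).
Qed.

(* Once the ray from x gains less than c per step, so does every further step
   from any w >= x. *)
Lemma threshold_gain_le x w e r s c : vle x w -> (s <= m)%N ->
  (r = m \/ f (vadd x (uvec e r.+1)) - f (vadd x (uvec e r)) < c) ->
  f (vadd w (uvec e (maxn r s))) - f w
  <= f (vadd x (uvec e r)) - f x + (s - r)%:R * c.
Proof.
move=> hxw hs hr; case: (leqP s r) => hsr.
  by rewrite (eqP (_ : s - r == 0)%N) ?subn_eq0 // mul0r addr0; apply: DR_gain_le.
have {}hr : f (vadd x (uvec e r.+1)) - f (vadd x (uvec e r)) < c.
  by case: hr => // hrm; move: hs; rewrite -hrm leqNgt hsr.
have h1 := DR_gain_le fDR (uvec e r) hxw.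
have h2 : f (vadd w (uvec e s)) - f (vadd w (uvec e r)) <= (s - r)%:R * c.
  have -> : vadd w (uvec e s) = vadd (vadd w (uvec e r)) (uvec e (s - r)).
    by rewrite -vaddA -uvecD subnKC // ltnW.
  apply: line_gain_le => j _; rewrite -!vaddA -!uvecD; apply: le_trans (ltW hr).
  apply: le_trans (DR_line_marginal fDR x e (leq_addr j r)).
  rewrite addnS (vadd_uvecS w) (vadd_uvecS x).
  exact/fDR/vle_add2r.
lra.
Qed.

(* By monotonicity every test of the search succeeds. *)
Lemma best_d_result e : (qrun f (best_d k alpha e)).1 = k.
Proof.
have := bsearch_spec (f := f)
  (P := fun d : nat => qbind (query (uvec e d)) (fun a =>
        qbind (query (uvec e d.-1)) (fun b => QRet (0 <= a - b))))
  (fuel := (k - m.+1)%N) (lo0 := m.+1) (hi0 := k) (lo := m.+1) (hi := k).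
rewrite leqnn m_alpha_lt => /(_ isT (leqnn _) (leqnn _) (or_introl erefl) (or_introl erefl)).
case=> _ _ [//|] /=; rewrite subr_ge0 (DR_monotone fDR f_ge0) //.
by move=> i; rewrite !uvecE; case: ifP.
Qed.

Lemma best_d_queries e : ((qrun f (best_d k alpha e)).2 <= 2 * J)%N.
Proof. exact: bsearch_queries (leq_ltn_trans (leq_subr _ _) (trunc_log_ltn _ _)). Qed.

Lemma d_of_spec x e :
  let r := (qrun f (d_of k alpha x e)).1 in
  [/\ (r <= m)%N,
      r = 0%N \/ f x / k%:R <= f (vadd x (uvec e r)) - f (vadd x (uvec e r.-1))
    & r = m \/ f (vadd x (uvec e r.+1)) - f (vadd x (uvec e r)) < f x / k%:R].
Proof.
have := bsearch_spec (f := f)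
  (P := fun d : nat => qbind (query (vadd x (uvec e d))) (fun a =>
        qbind (query (vadd x (uvec e d.-1))) (fun b => QRet (f x / k%:R <= a - b))))
  (fuel := (m - 0)%N) (lo0 := 0%N) (hi0 := m) (lo := 0%N) (hi := m).
move=> /(_ (leq0n _) (leqnn _) (leqnn _) (or_introl erefl) (or_introl erefl)) /=.
rewrite /bsearch_top; case=> hm h1 h2; split=> //.
by case: h2 => [->|h2]; [left | right; rewrite ltNge].
Qed.

Lemma d_of_queries x e : ((qrun f (d_of k alpha x e)).2 <= (2 * J).+1)%N.
Proof.
rewrite /= ltnS; apply: bsearch_queries => //; rewrite subn0.
exact: ltn_trans m_alpha_lt (trunc_log_ltn _ _).
Qed.

End Thresholds.

Section GreedyChains.
Variables (R : realType) (n k : nat) (alpha : R) (f : vec n -> R).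
Hypothesis f_ge0 : forall x, 0 <= f x.
Hypothesis fDR : DR_submodular f.
Hypothesis k_gt0 : (0 < k)%N.
Hypotheses (alpha_gt0 : 0 < alpha) (alpha_lt1 : alpha < 1).
Implicit Types (x y v w z : vec n) (e i : 'I_n) (l : seq 'I_n).

Local Notation m := (m_alpha k alpha).

Definition xsuf x l t : vec n :=
  [ffun i => if i \in take t (rev l) then 0%N else x i].

(* x is built along l with blocks of size <= m, each added with marginal density
   >= f(current)/k; the last clause is what this buys for the t most recent blocks
   [xpref x l t] against the earlier ones [xsuf x l t]. *)
Definition greedy_chain x l :=
  [/\ forall i, (x i <= m)%N, forall i, i \notin l -> x i = 0%N &
      forall t, (norm1 (xpref x l t))%:R * f (xsuf x l t) <= k%:R * f (xpref x l t)].

Lemma xpref_xsuf x l t : vadd (xpref x l t) (xsuf x l t) = x.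
Proof. by apply/ffunP=> i; rewrite vaddE !ffunE; case: ifP; rewrite ?addn0. Qed.

Lemma vle_xpref x l t : vle (xpref x l t) x.
Proof. by move=> i; rewrite ffunE; case: ifP. Qed.

Lemma vle_xsuf x l t : vle (xsuf x l t) x.
Proof. by move=> i; rewrite ffunE; case: ifP. Qed.

Lemma xpref0 x l : xpref x l 0 = 0.
Proof. by apply/ffunP=> i; rewrite !ffunE take0. Qed.

Lemma kf_ge0 x : 0 <= k%:R * f x.
Proof. by rewrite mulr_ge0. Qed.

Lemma greedy_chain0 : greedy_chain 0 [::].
Proof.
split=> [i|i _|t]; rewrite ?vec0E //.
by rewrite (_ : xpref 0 [::] t = 0) ?norm10 ?mul0r ?kf_ge0.
Qed.

(* The new block is the most recent one, so it joins every nonempty prefix; DR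
   lets its gain, >= d f(x)/k, transfer to that prefix. *)
Lemma greedy_chain_add x l e d :
  greedy_chain x l -> e \notin l -> (d <= m)%N ->
  d%:R * (f x / k%:R) <= f (vadd x (uvec e d)) - f x ->
  greedy_chain (vadd x (uvec e d)) (if (0 < d)%N then rcons l e else l).
Proof.
move=> [c1 c2 c3] el dm hg; have xe := c2 e el.
case: (posnP d) => [->|dpos]; first by rewrite uvec0 vaddv0.
have e_take t : e \notin take t (rev l).
  by apply: contra el => /mem_take; rewrite mem_rev.
split.
- by move=> i; rewrite vaddE uvecE; case: eqP => [->|_]; rewrite ?xe ?addn0.
- move=> i; rewrite mem_rcons in_cons negb_or => /andP[ie il].
  by rewrite vaddE uvecE (negbTE ie) addn0 c2.
case=> [|t]; first by rewrite xpref0 norm10 mul0r kf_ge0.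
have -> : xpref (vadd x (uvec e d)) (rcons l e) t.+1 = vadd (xpref x l t) (uvec e d).
  apply/ffunP=> i; rewrite vaddE !ffunE rev_rcons /= in_cons.
  by case: eqP => [->|_] /=; rewrite ?(negbTE (e_take t)) ?xe ?addn0.
have -> : xsuf (vadd x (uvec e d)) (rcons l e) t.+1 = xsuf x l t.
  apply/ffunP=> i; rewrite !ffunE rev_rcons /= in_cons.
  by case: eqP => [->|_] /=; rewrite ?(negbTE (e_take t)) ?xe ?addn0.
rewrite norm1D norm1_uvec natrD mulrDl.
set P := xpref x l t; set S := xsuf x l t.
have hP : f (vadd x (uvec e d)) - f x <= f (vadd P (uvec e d)) - f P.
  exact: DR_gain_le (vle_xpref x l t).
have hS : f S <= f x by apply: DR_monotone (vle_xsuf x l t).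
have hk : (0 : R) < k%:R by rewrite ltr0n.
have hgain : d%:R * f x <= k%:R * (f (vadd P (uvec e d)) - f P).
  rewrite -[d%:R * f x](mulfK (lt0r_neq0 hk)) mulrAC mulrC -mulrA.
  by rewrite ler_pM2l //; lra.
have := c3 t; have : d%:R * f S <= d%:R * f x by rewrite ler_wpM2l.
rewrite -/P -/S; lra.
Qed.

Lemma norm1_xprefS x l t : (forall i, (x i <= m)%N) ->
  (norm1 (xpref x l t.+1) <= norm1 (xpref x l t) + m)%N.
Proof.
move=> xm; case: (ltnP t (size (rev l))) => ht; last first.
  by rewrite /xpref !take_oversize ?leq_addr // leqW.
case E: (rev l) ht => [|a0 s] ht //.
have := take_nth a0 ht; set a := nth a0 _ t => Ht.
rewrite -(norm1_uvec a m) -norm1D; apply: norm1_vle => i.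
rewrite vaddE !ffunE E Ht mem_rcons in_cons.
case: eqP => [->|_] /=; last by rewrite addn0.
by case: ifP => _; [exact: leq_addr | rewrite add0n xm].
Qed.

Lemma trim_index x l : exists t,
  [/\ trim k x l = xpref x l t, (norm1 (xpref x l t) <= k)%N
    & (size l <= t)%N \/ (k < norm1 (xpref x l t.+1))%N].
Proof.
rewrite /trim; set T := (\max_(t < _ | _) _)%N; exists T; split=> //.
  by rewrite /T; elim/big_ind: _ => // [|a b ha hb]; rewrite ?xpref0 ?norm10 // /maxn; case: ifP.
case: (ltnP T (size l)) => hT; [right | by left].
rewrite ltnNge; apply/negP => hk.
have := @leq_bigmax_cond _ (fun t : 'I_(size l).+1 => norm1 (xpref x l t) <= k)%N
  (fun t => nat_of_ord t) (Ordinal (hT : T.+1 < (size l).+1)%N) hk.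
by rewrite ltnn.
Qed.

Lemma trim_feasible x l : feasible k (trim k x l).
Proof.
have [t [-> ht _]] := trim_index x l.
by split=> // i; apply: leq_trans (leq_norm1 _ i) ht.
Qed.

(* If the trimmed prefix P misses the next block, |P| > k - m >= (1 - alpha) k,
   and the chain inequality bounds the rest by f P / (1 - alpha). *)
Lemma trim_value x l : greedy_chain x l ->
  (1 - alpha) * f x <= (2 - alpha) * f (trim k x l).
Proof.
move=> [c1 c2 c3]; have [t [-> _ [ht|hnext]]] := trim_index x l.
  rewrite (_ : xpref x l t = x); first by have := f_ge0 x; lra.
  apply/ffunP=> i; rewrite ffunE take_oversize ?size_rev // mem_rev.
  by case: ifP => // /negbT /c2 ->.
have := DR_subadditive fDR (xpref x l t) (xsuf x l t).
rewrite xpref_xsuf; set P := xpref x l t; set S := xsuf x l t => hsub.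
have hPk : (1 - alpha) * k%:R <= (norm1 P)%:R.
  have := norm1_xprefS l t c1; rewrite -/P => hN.
  have : (k%:R : R) <= (norm1 P)%:R + m%:R by rewrite -natrD ler_nat; lia.
  by have := m_alpha_le k alpha_gt0; rewrite mulrBl mul1r; lra.
have hS : (1 - alpha) * f S <= f P.
  have hk : (0 : R) < k%:R by rewrite ltr0n.
  rewrite -(ler_pM2l hk) mulrA (mulrC k%:R); apply: le_trans (c3 t).
  by apply: ler_wpM2r.
have := f_ge0 0; have := f_ge0 S; have := f_ge0 P.
have a1 : 0 <= 1 - alpha by rewrite subr_ge0 ltW.
have : (1 - alpha) * f x <= (1 - alpha) * (f P + f S - f 0) by rewrite ler_wpM2l.
nra.
Qed.

End GreedyChains.

Section Sweep.
Variables (R : realType) (n k : nat) (alpha : R) (f : vec n -> R).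
Hypothesis f_ge0 : forall x, 0 <= f x.
Hypothesis fDR : DR_submodular f.
Hypothesis k_gt0 : (0 < k)%N.
Hypotheses (alpha_gt0 : 0 < alpha) (alpha_lt1 : alpha < 1).
Implicit Types (x y v w z o : vec n) (e i : 'I_n) (l : seq 'I_n).

Local Notation m := (m_alpha k alpha).
Local Notation J := (trunc_log 2 k).+1.
Local Notation dx x e := (qrun f (d_of k alpha x e)).1.

Definition vmax x o : vec n := [ffun i => maxn (x i) (o i)].
Definition vdel o e : vec n := [ffun i => if i == e then 0%N else o i].

Lemma vle_vmaxl x o : vle x (vmax x o). Proof. by move=> i; rewrite ffunE leq_maxl. Qed.
Lemma vle_vmaxr x o : vle o (vmax x o). Proof. by move=> i; rewrite ffunE leq_maxr. Qed.
Lemma vle_vmax2l x y o : vle x y -> vle (vmax x o) (vmax y o).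
Proof. by move=> hxy i; rewrite !ffunE geq_max leq_maxr (leq_trans (hxy i)) ?leq_maxl. Qed.

Lemma norm1_vdel o e : norm1 o = (norm1 (vdel o e) + o e)%N.
Proof.
rewrite -(norm1_uvec e (o e)) -norm1D; congr norm1.
by apply/ffunP=> i; rewrite !ffunE; case: eqP => [->|]; rewrite ?addn0.
Qed.

Definition sweep_inv (st : state n) (todo : seq 'I_n) : Prop :=
  let: (x, y, lx, ly) := st in
  [/\ uniq todo, greedy_chain k alpha f x lx, greedy_chain k alpha f y ly,
      forall i, i \in todo -> i \notin lx /\ i \notin ly &
      forall o, (forall i, (o i <= m)%N) -> (forall i, i \in todo -> o i = 0%N) ->
        f (vmax x o) <= f x + (norm1 o)%:R * (f x / k%:R) + f y - f 0].

Lemma sweep_inv0 : sweep_inv (0, 0, [::], [::]) (enum 'I_n).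
Proof.
split=> //; [exact: enum_uniq | exact: greedy_chain0 | exact: greedy_chain0 |].
move=> o _ o0; have -> : o = 0 by apply/ffunP=> i; rewrite vec0E o0 ?mem_enum.
rewrite (_ : vmax 0 0 = 0) ?norm10 ?mul0r ?addr0; last by apply/ffunP=> i; rewrite !ffunE.
by have := f_ge0 0; lra.
Qed.

Lemma step3_result x y lx ly e :
  (qrun f (step3 k alpha (x, y, lx, ly) e)).1 =
  if f (vadd y (uvec e (dx y e))) - f y <= f (vadd x (uvec e (dx x e))) - f x
  then (vadd x (uvec e (dx x e)), y, if (0 < dx x e)%N then rcons lx e else lx, ly)
  else (x, vadd y (uvec e (dx y e)), lx, if (0 < dx y e)%N then rcons ly e else ly).
Proof.
rewrite /step3 qrun_bind; cbv beta; rewrite qrun_bind; cbv beta.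
by move: (dx x e) (dx y e) => a b /=; case: ifP.
Qed.

Lemma step3_queries st e : ((qrun f (step3 k alpha st e)).2 <= 4 * J + 6)%N.
Proof.
case: st => [[[x y] lx] ly]; rewrite /step3 qrun_bind; cbv beta; rewrite qrun_bind.
have := d_of_queries f k_gt0 alpha_gt0 alpha_lt1 x e.
have := d_of_queries f k_gt0 alpha_gt0 alpha_lt1 y e.
move: (qrun f (d_of k alpha x e)) (qrun f (d_of k alpha y e)) => [a ca] [b cb] /=.
by case: ifP => _ /=; lia.
Qed.

(* Beyond d_(x,e) the marginals of x along e fall below f(x)/k, and DR carries
   this over to vmax x o. *)
Lemma vmax_add_le x o e : x e = 0%N -> (forall i, (o i <= m)%N) ->
  f (vmax (vadd x (uvec e (dx x e))) o)
  <= f (vmax x (vdel o e)) + (f (vadd x (uvec e (dx x e))) - f x)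
     + (o e)%:R * (f x / k%:R).
Proof.
move=> xe om; have [_ _ hdx] := d_of_spec k alpha f x e.
have -> : vmax (vadd x (uvec e (dx x e))) o
          = vadd (vmax x (vdel o e)) (uvec e (maxn (dx x e) (o e))).
  by apply/ffunP=> i; rewrite !ffunE; case: eqP => [->|]; rewrite ?xe ?addn0.
have := threshold_gain_le fDR (vle_vmaxl x (vdel o e)) (om e) hdx.
have : (o e - dx x e)%:R * (f x / k%:R) <= (o e)%:R * (f x / k%:R).
  by rewrite ler_wpM2r ?divr_ge0 ?ler_nat ?leq_subr.
lra.
Qed.

Lemma sweep_bound_add x y o e todo :
  x e = 0%N -> (forall i, (o i <= m)%N) -> (forall i, i \in todo -> o i = 0%N) ->
  (forall o, (forall i, (o i <= m)%N) -> (forall i, i \in e :: todo -> o i = 0%N) ->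
     f (vmax x o) <= f x + (norm1 o)%:R * (f x / k%:R) + f y - f 0) ->
  f (vmax (vadd x (uvec e (dx x e))) o)
  <= f (vadd x (uvec e (dx x e))) + (norm1 o)%:R * (f x / k%:R) + f y - f 0.
Proof.
move=> xe om o0 hbound.
have hdel : f (vmax x (vdel o e))
            <= f x + (norm1 (vdel o e))%:R * (f x / k%:R) + f y - f 0.
  apply: hbound => i; rewrite ffunE; first by case: ifP.
  by rewrite in_cons; case: eqP => //= _; apply: o0.
have := vmax_add_le xe om; rewrite (norm1_vdel o e) natrD mulrDl; lra.
Qed.

Lemma notin_rcons_if (i e : 'I_n) l (b : bool) :
  i != e -> i \notin l -> i \notin (if b then rcons l e else l).
Proof. by move=> ie il; case: b; rewrite // mem_rcons in_cons negb_or ie. Qed.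

Lemma sweep_inv_step e todo st :
  sweep_inv st (e :: todo) -> sweep_inv (qrun f (step3 k alpha st e)).1 todo.
Proof.
case: st => [[[x y] lx] ly] [/andP[etodo utodo] cx cy fresh hbound].
have [elx ely] := fresh e (mem_head e todo).
have xe : x e = 0%N by case: cx => _ -> .
have ye : y e = 0%N by case: cy => _ -> .
have fresh' i : i \in todo -> [/\ i != e, i \notin lx & i \notin ly].
  move=> hi; have [il il'] := fresh i (mem_behead (s := e :: todo) hi).
  by split=> //; apply: contraNneq etodo => <-.
have gain z : (dx z e)%:R * (f z / k%:R) <= f (vadd z (uvec e (dx z e))) - f z.
  by have [_ hge _] := d_of_spec k alpha f z e; apply: threshold_gain_ge.
have [dxm _ _] := d_of_spec k alpha f x e; have [dym _ _] := d_of_spec k alpha f y e.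
have hk : (0 : R) < k%:R by rewrite ltr0n.
rewrite step3_result; case: ifP => hcmp; split=> //.
- exact: greedy_chain_add (gain x).
- by move=> i /fresh'[ie il il']; split=> //; apply: notin_rcons_if.
- move=> o om o0; have := sweep_bound_add xe om o0 hbound.
  set x' := vadd x _; have hxx' : f x <= f x' by apply: DR_monotone (vle_addr _ _).
  have : (norm1 o)%:R * (f x / k%:R) <= (norm1 o)%:R * (f x' / k%:R).
    by rewrite ler_wpM2l // ler_wpM2r // invr_ge0 ltW.
  lra.
- exact: greedy_chain_add (gain y).
- by move=> i /fresh'[ie il il']; split=> //; apply: notin_rcons_if.
move=> o om o0; have := sweep_bound_add xe om o0 hbound.
have : f (vmax x o) <= f (vmax (vadd x (uvec e (dx x e))) o).
  exact/DR_monotone/vle_vmax2l/vle_addr.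
by move/negbT: hcmp; rewrite -ltNge; lra.
Qed.

End Sweep.

Section Selection.
Variables (R : realType) (n k : nat) (alpha : R) (f : vec n -> R).
Hypothesis f_ge0 : forall x, 0 <= f x.
Hypothesis fDR : DR_submodular f.
Hypothesis k_gt0 : (0 < k)%N.
Hypotheses (alpha_gt0 : 0 < alpha) (alpha_lt1 : alpha < 1).
Implicit Types (x y v w z o : vec n) (e i : 'I_n).

Local Notation J := (trunc_log 2 k).+1.
Local Notation cand := (option (R * nat * 'I_n)).

Definition step1_step (best : cand) e : qprog (vec n) R cand :=
  qbind (best_d k alpha e) (fun d =>
  qbind (query (uvec e d)) (fun fv =>
    QRet (match best with
          | None => Some (fv, d, e)
          | Some (bv, bd, be) => if bv < fv then Some (fv, d, e) else Some (bv, bd, be)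
          end))).

Lemma step1E : step1 n k alpha = qfoldl step1_step None (enum 'I_n).
Proof. by []. Qed.

Definition cand_valid (best : cand) :=
  forall r d e, best = Some (r, d, e) -> r = f (uvec e d) /\ (d <= k)%N.

Definition cand_dominates (best : cand) e' :=
  exists r d e, best = Some (r, d, e) /\ f (uvec e' k) <= r.

Definition step1_inv (best : cand) (todo : seq 'I_n) :=
  [/\ uniq todo, cand_valid best & forall e', e' \notin todo -> cand_dominates best e'].

Lemma step1_inv_step e todo best :
  step1_inv best (e :: todo) -> step1_inv (qrun f (step1_step best e)).1 todo.
Proof.
case=> /andP[etodo utodo] hval hdom.
rewrite qrun_bind best_d_result //=; split=> //.
  case: best hval {hdom} => [[[bv bd] be]|] hval; last by move=> r d e' [<- <- <-].
  by case: ifP => _ r d e' [<- <- <-]; [| apply: hval].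
move=> e' he'; case: (eqVneq e' e) => [->|e'e].
  case: best hval {hdom} => [[[bv bd] be]|] _ /=; last by exists (f (uvec e k)), k, e.
  case: ifP => hlt; first by exists (f (uvec e k)), k, e.
  by exists bv, bd, be; rewrite leNgt hlt.
have [r [d [e0 [-> hr]]]] : cand_dominates best e' by apply: hdom; rewrite in_cons negb_or e'e.
case: ifP => hlt; last by exists r, d, e0.
by exists (f (uvec e k)), k, e; split=> //; apply: le_trans hr (ltW hlt).
Qed.

Lemma step1_spec : let best := (qrun f (step1 n k alpha)).1 in
  cand_valid best /\ forall e', cand_dominates best e'.
Proof.
have [_ hval hdom] : step1_inv (qrun f (step1 n k alpha)).1 [::].
  rewrite step1E; apply: qfoldl_ind; first exact: step1_inv_step.
  by split=> // [|e']; [exact: enum_uniq | rewrite mem_enum].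
by split=> // e'; apply: hdom.
Qed.

Lemma step1_queries : ((qrun f (step1 n k alpha)).2 <= n * (2 * J).+1)%N.
Proof.
rewrite step1E -[X in (_ <= X * _)%N](size_enum_ord n).
apply: qfoldl_queries => best e; rewrite qrun_bind /= addn1 ltnS.
exact: best_d_queries.
Qed.

Definition pick_step (b : vec n * R) c : qprog (vec n) R (vec n * R) :=
  qbind (query c) (fun fc => QRet (if b.2 < fc then (c, fc) else b)).

Lemma pick_bestE cur cands : pick_best R cur cands =
  qbind (query cur) (fun fc =>
  qbind (qfoldl pick_step (cur, fc) cands) (fun b => QRet b.1)).
Proof. by []. Qed.

Lemma pick_fold s b : b.2 = f b.1 ->
  let r := qrun f (qfoldl pick_step b s) in
  [/\ r.1.2 = f r.1.1, r.1.1 \in b.1 :: s, f b.1 <= r.1.2,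
      forall c, c \in s -> f c <= r.1.2 & r.2 = size s].
Proof.
elim: s b => [|c s IH] b hb; first by split; rewrite //= ?mem_head ?hb.
rewrite (qrun_bind f (pick_step b c) (fun b => qfoldl pick_step b s)) /=.
set b' := if b.2 < f c then _ else _.
have hb' : b'.2 = f b'.1 by rewrite /b'; case: ifP.
have hbb' : f b.1 <= b'.2 /\ f c <= b'.2.
  by rewrite /b' -hb; case: ifP => /= hl; split=> //; [exact: ltW | rewrite leNgt hl].
have [h1 h2 h3 h4 ->] := IH b' hb'; rewrite hb' in hbb'; case: hbb' => hb1 hc.
split=> //.
- by move: h2; rewrite /b' !inE; case: ifP => _ /=; case/orP=> ->; rewrite ?orbT.
- exact: le_trans hb1 h3.
- by move=> c'; rewrite in_cons => /orP[/eqP ->|/h4]; [apply: le_trans hc h3 |].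
Qed.

Lemma pick_bestP cur cands :
  let r := qrun f (pick_best R cur cands) in
  [/\ r.1 \in cur :: cands, f cur <= f r.1,
      forall c, c \in cands -> f c <= f r.1 & r.2 = (size cands).+1].
Proof.
rewrite pick_bestE /= qrun_bind /=.
have [h1 h2 h3 h4 h5] := pick_fold cands (b := (cur, f cur)) erefl.
by split; rewrite -?h1 // h5 addn0.
Qed.

End Selection.

Section Approximation.
Variables (R : realType) (n k : nat) (alpha : R) (f : vec n -> R).
Hypothesis f_ge0 : forall x, 0 <= f x.
Hypothesis fDR : DR_submodular f.
Hypothesis k_gt0 : (0 < k)%N.
Hypotheses (alpha_gt0 : 0 < alpha) (alpha_lt1 : alpha < 1).
Implicit Types (x y v w z o : vec n) (e i : 'I_n) (l : seq 'I_n).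

Local Notation m := (m_alpha k alpha).
Local Notation J := (trunc_log 2 k).+1.
Local Notation ratio := (8%:R * ((2%:R - alpha) / (1 - alpha)) + 1 / alpha).

Definition vlow o : vec n := [ffun i => if (m < o i)%N then 0%N else o i].
Definition vhigh o : vec n := [ffun i => if (m < o i)%N then o i else 0%N].

Lemma vlow_vhigh o : vadd (vlow o) (vhigh o) = o.
Proof. by apply/ffunP=> i; rewrite !ffunE; case: ifP; rewrite ?addn0. Qed.

Lemma feasible_uvec e d : (d <= k)%N -> feasible k (uvec e d).
Proof. by move=> hd; split=> [|i]; rewrite ?norm1_uvec // uvecE; case: ifP. Qed.

(* Each coordinate above m exceeds alpha k, so a feasible o has at most 1/alpha. *)
Lemma count_high_le o : feasible k o ->
  (\sum_(i < n) (m < o i)%N : nat)%:R * alpha <= 1.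
Proof.
case=> ho _; set c := (\sum_(i < n) _)%N.
have : (c * m.+1 <= k)%N.
  rewrite /c big_distrl /=; apply: leq_trans ho; apply: leq_sum => i _.
  by case: ltnP; rewrite ?mul1n ?mul0n.
rewrite -(ler_nat R) natrM => hc.
have := m_alpha_gt k alpha; have hk : (0 : R) < k%:R by rewrite ltr0n.
have : (0 : R) <= c%:R by [].
nra.
Qed.

Lemma f_vhigh_le o (F : R) : 0 <= F -> feasible k o ->
  (forall i, f (uvec i k) <= F) -> f o <= f (vlow o) + F / alpha.
Proof.
move=> F0 ho hF.
have := DR_gain_le fDR (vhigh o) (vle0v (vlow o)); rewrite vadd0v vlow_vhigh.
have := DR_gain_le_sum fDR 0 (vhigh o); rewrite vadd0v.
have : \sum_(i < n) (f (vadd 0 (uvec i (vhigh o i))) - f 0)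
       <= (\sum_(i < n) (m < o i)%N : nat)%:R * F.
  rewrite natr_sum mulr_suml; apply: ler_sum => i _; rewrite vadd0v ffunE.
  case: ifP => _; last by rewrite uvec0 subrr mul0r.
  rewrite mul1r; have := f_ge0 0; suff : f (uvec i (o i)) <= F by lra.
  apply: le_trans (hF i); apply: DR_monotone => // j; rewrite !uvecE.
  by case: ifP => //; case: ho => _ ->.
have : (\sum_(i < n) (m < o i)%N : nat)%:R * F <= F / alpha.
  rewrite ler_pdivlMr // mulrAC; apply: le_trans (_ : 1 * F <= F); last by rewrite mul1r.
  by apply: ler_wpM2r => //; apply: count_high_le.
lra.
Qed.

Lemma f_vlow_le st o : sweep_inv k alpha f st [::] -> feasible k o ->
  let: (x, y, _, _) := st in f (vlow o) <= 2%:R * f x + f y - f 0.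
Proof.
case: st => [[[x y] lx] ly] [_ _ _ _ hbound] [ho _].
have low_m i : (vlow o i <= m)%N by rewrite ffunE; case: ltnP.
have : f (vmax x (vlow o)) <= f x + (norm1 (vlow o))%:R * (f x / k%:R) + f y - f 0.
  by apply: hbound.
have : f (vlow o) <= f (vmax x (vlow o)) by apply: DR_monotone (vle_vmaxr _ _).
have : (norm1 (vlow o))%:R * (f x / k%:R) <= f x.
  have hk : (0 : R) < k%:R by rewrite ltr0n.
  apply: le_trans (_ : k%:R * (f x / k%:R) <= _); last by rewrite mulrC divfK ?lt0r_neq0.
  apply: ler_wpM2r; first by rewrite divr_ge0 // ltW.
  rewrite ler_nat; apply: leq_trans ho.
  by apply: norm1_vle => i; rewrite ffunE; case: ifP.
lra.
Qed.

Lemma FastDrSub_bound st (F : R) o : 0 <= F ->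
  sweep_inv k alpha f st [::] -> (forall i, f (uvec i k) <= F) ->
  (let: (x, y, lx, ly) := st in f (trim k x lx) <= F /\ f (trim k y ly) <= F) ->
  feasible k o -> f o / ratio <= F.
Proof.
move=> F0 hsw hF; have hlow := f_vlow_le hsw.
case: st hsw hlow => [[[x y] lx] ly] [_ cx cy _ _] hlow [hx hy] ho.
set rho := (2%:R - alpha) / (1 - alpha).
have a1 : 0 < 1 - alpha by rewrite subr_gt0.
have rho_bound z l : greedy_chain k alpha f z l -> f (trim k z l) <= F -> f z <= rho * F.
  move=> /(trim_value f_ge0 fDR k_gt0 alpha_gt0 alpha_lt1) hz hzF.
  rewrite /rho mulrAC ler_pdivlMr // mulrC; apply: le_trans hz _.
  by rewrite ler_wpM2l //; lra.
have := rho_bound _ _ cx hx; have := rho_bound _ _ cy hy.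
have := f_vhigh_le F0 ho hF; have := hlow o ho; have := f_ge0 0.
have rho_gt0 : 0 < rho by rewrite divr_gt0 //; lra.
have rho0 : 0 <= rho * F by rewrite mulr_ge0 // ltW.
have ratio0 : 0 < 8%:R * rho + 1 / alpha.
  by apply: addr_gt0; [apply: mulr_gt0 | apply: divr_gt0].
rewrite ler_pdivrMr // mulrDr mul1r; lra.
Qed.

Lemma pick_best_final best x y lx ly :
  cand_valid k f best -> (forall e', cand_dominates k f best e') ->
  sweep_inv k alpha f (x, y, lx, ly) [::] ->
  let r := qrun f (pick_best R (trim k x lx)
             (trim k y ly :: if best is Some (_, d, e) then [:: uvec e d] else [::])) in
  [/\ feasible k r.1, forall o, feasible k o -> f o / ratio <= f r.1 & (r.2 <= 3)%N].
Proof.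
move=> bval bdom sw; cbv zeta; set cands := (trim k y ly :: _).
have feas c : c \in trim k x lx :: cands -> feasible k c.
  rewrite !in_cons => /orP[/eqP-> | /orP[/eqP-> | ]]; try exact: trim_feasible.
  case: best bval {bdom cands} => [[[r d] e]|] bval //.
  by rewrite inE => /eqP ->; have [_ hd] := bval _ _ _ erefl; apply: feasible_uvec.
have [/feas hz1 hz2 hz3 ->] := pick_bestP f (trim k x lx) cands.
split=> //; last by rewrite /cands; case: (best) => [[[? ?] ?]|].
move=> o; apply: FastDrSub_bound (f_ge0 _) sw _ _ => [i|].
  have [r [d [e [hbest hr]]]] := bdom i.
  have [hr' _] := bval _ _ _ hbest; rewrite hr' in hr; apply: le_trans hr (hz3 _ _).
  by rewrite /cands hbest !inE eqxx orbT.
by split=> //; apply: hz3; rewrite mem_head.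
Qed.

Lemma FastDrSub_spec : let res := qrun f (FastDrSub n k alpha) in
  [/\ feasible k res.1,
      forall o, feasible k o -> f o / ratio <= f res.1
    & (res.2 <= 13 * n.+1 * J)%N].
Proof.
rewrite /FastDrSub qrun_bind; cbv beta; rewrite qrun_bind.
have [bval bdom] := step1_spec f_ge0 fDR k_gt0 alpha_gt0 alpha_lt1.
have c1 := step1_queries k alpha f.
set sweep := qfoldl (step3 k alpha) (0, 0, [::], [::]) (enum 'I_n).
have sw : sweep_inv k alpha f (qrun f sweep).1 [::].
  exact: qfoldl_ind (sweep_inv_step f_ge0 fDR k_gt0) _ _ (sweep_inv0 k alpha f_ge0).
have c3 := qfoldl_queries (step3_queries f k_gt0 alpha_gt0 alpha_lt1) (enum 'I_n)
  (0, 0, [::], [::]).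
rewrite size_enum_ord -/sweep in c3.
move: (qrun f (step1 n k alpha)) bval bdom c1 => [best cb] bval bdom c1.
move: (qrun f sweep) sw c3 => [[[[x y] lx] ly] cs] sw c3.
move: bval bdom c1 sw c3; cbv beta iota zeta delta [fst snd] => bval bdom c1 sw c3.
have := pick_best_final bval bdom sw.
move: (qrun f (pick_best R _ _)) => [z cp] /= [hfeas happrox hcp].
by split=> //; nia.
Qed.

End Approximation.

Lemma ratio_at_sqrt2 (R : realType) (alpha : R) :
  alpha = (2%:R * Num.sqrt 2%:R - 1) / 7%:R ->
  1 / (8%:R * ((2%:R - alpha) / (1 - alpha)) + 1 / alpha)
  = 1 / (17%:R + 4%:R * Num.sqrt 2%:R).
Proof.
set s := Num.sqrt 2%:R => ha.
have s2 : s * s = 2%:R by rewrite -expr2 sqr_sqrtr // ler0n.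
have s_gt1 : 1 < s by have := sqrtr_ge0 (2%:R : R); rewrite -/s; nra.
have a_gt0 : 0 < alpha by rewrite ha divr_gt0 ?ltr0n //; lra.
have a_lt1 : alpha < 1 by rewrite ha ltr_pdivrMr ?ltr0n // mul1r; nra.
have a_neq0 : alpha != 0 by rewrite gt_eqF.
have a1_neq0 : 1 - alpha != 0 by rewrite subr_eq0 eq_sym lt_eqF.
have inv_alpha : 1 / alpha = 2%:R * s + 1.
  apply: (mulfI a_neq0); rewrite mulrC divfK // ha.
  have -> : (2%:R * s - 1) / 7%:R * (2%:R * s + 1)
            = 1 + 4%:R / 7%:R * (s * s - 2%:R) :> R by field.
  by rewrite s2 subrr mulr0 addr0.
have rho : (2%:R - alpha) / (1 - alpha) = 2%:R + s / 4%:R.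
  apply: (mulIf a1_neq0); rewrite divfK // ha.
  have -> : (2%:R + s / 4%:R) * (1 - (2%:R * s - 1) / 7%:R)
            = 2%:R - (2%:R * s - 1) / 7%:R - 1 / 14%:R * (s * s - 2%:R) :> R by field.
  by rewrite s2 subrr mulr0 subr0.
by rewrite inv_alpha rho; congr (1 / _); field.
Qed.

Unset Implicit Arguments.

Theorem theorem1 (R : realType) (alpha : R) :
  0 < alpha < 1 ->
  (exists C : nat,
     forall (n k : nat) (f : vec n -> R),
       (0 < k)%N ->
       (forall x, 0 <= f x) ->
       DR_submodular f ->
       let res := qrun f (FastDrSub n k alpha) in
       let z := res.1 in
       let queries := res.2 in
       [/\ feasible k z,
           (forall x : vec n, feasible k x ->
              f x / (8%:R * ((2%:R - alpha) / (1 - alpha)) + 1 / alpha) <= f z)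
         & (queries <= C * n.+1 * (trunc_log 2 k).+1)%N])
  /\
  (alpha = (2%:R * Num.sqrt 2%:R - 1) / 7%:R ->
     1 / (8%:R * ((2%:R - alpha) / (1 - alpha)) + 1 / alpha)
     = 1 / (17%:R + 4%:R * Num.sqrt 2%:R)).
Proof.
case/andP=> alpha_gt0 alpha_lt1; split; last exact: ratio_at_sqrt2.
by exists 13%N => n k f k_gt0 f_ge0 fDR; apply: FastDrSub_spec.
Qed.
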